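(* Let $1\to A\to E\xrightarrow{\pi} G\to 1$ be an extension of groups, let $z\in A$ be a central element of $E$ with $z^2=1$, and let $\bar z:=\pi(z)$. Then there exists a dynamical cocycle $(\alpha,\beta)$ of the symmetric quandle $(\operatorname{Core}(G),\bar z)$ over the family of sets $S=\{S_x\}_{x\in G}$ with $S_x=A$ (the underlying set of $(\operatorname{Core}(A),z)$) for every $x$, such that $(\operatorname{Core}(E),z)$ is isomorphic as a symmetric quandle to $(\operatorname{Core}(G),\bar z)\times_{(\alpha,\beta)}(\operatorname{Core}(A),z)$.
   Context: For a group $H$, the core quandle $\operatorname{Core}(H)$ is the set $H$ with $x*y=yx^{-1}y$. If $c\in H$ is central with $c^2=1$, then $y\mapsto yc$ is a good involution on $\operatorname{Core}(H)$, and the resulting symmetric quandle is denoted $(\operatorname{Core}(H),c)$. Here a quandle is a set with binary operation $*$ such that each $x\mapsto x*y$ is bijective (inverse $x\mapsto x*^{-1}y$), $(x*y)*z=(x*z)*(y*z)$ and $x*x=x$; a good involution is $\rho$ with $\rho^2=\mathrm{id}$, $\rho(x*y)=\rho(x)*y$, $x*\rho(y)=x*^{-1}y$; symmetric quandle homomorphisms preserve $*$ and commute with involutions. A dynamical cocycle of a symmetric quandle $(X,\rho)$ over a family of sets $S=\{S_x\}$ consists of maps $\alpha_{x,y}:S_x\times S_y\to S_{x*y}$, $\beta_x:S_x\to S_{\rho(x)}$ such that for all $x,y,z$, $s\in S_x,t\in S_y,w\in S_z$ (with $\alpha_{x,y}(t)(s):=\alpha_{x,y}(s,t)$): (1) $\alpha_{x,y}(t)$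 is bijective $S_x\to S_{x*y}$; (2) $\alpha_{x*y,z}(\alpha_{x,y}(s,t),w)=\alpha_{x*z,y*z}(\alpha_{x,z}(s,w),\alpha_{y,z}(t,w))$; (3) $\alpha_{\rho(x),y}(\beta_x(s),t)=\beta_{x*y}(\alpha_{x,y}(s,t))$; (4) $\beta_{\rho(x)}\beta_x(s)=s$; (5) $\alpha_{x,\rho(y)}(\beta_y(t))(s)=(\alpha_{x*^{-1}y,y}(t))^{-1}(s)$; (6) $\alpha_{x,x}(s,s)=s$. The extension $X\times_{(\alpha,\beta)}S$ is the set $\{(x,s)\mid x\in X,s\in S_x\}$ with $(x,s)*(y,t)=(x*y,\alpha_{x,y}(s,t))$ and involution $(x,s)\mapsto(\rho(x),\beta_x(s))$. *)

From mathcomp Require Import ssreflect ssrfun ssrbool.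

Set Implicit Arguments.
Unset Strict Implicit.
Unset Printing Implicit Defensive.

Record Group := {
  gcar :> Type;
  gmul : gcar -> gcar -> gcar;
  ginv : gcar -> gcar;
  gone : gcar;
  gmulA : forall x y z, gmul x (gmul y z) = gmul (gmul x y) z;
  gmul1g : forall x, gmul gone x = x;
  gmulg1 : forall x, gmul x gone = x;
  gmulVg : forall x, gmul (ginv x) x = gone;
  gmulgV : forall x, gmul x (ginv x) = gone
}.

Arguments gmul {g}.
Arguments ginv {g}.
Arguments gone {g}.

Definition is_hom (G H : Group) (f : G -> H) : Prop :=
  forall x y : G, f (gmul x y) = gmul (f x) (f y).

Definition group_extension (A E G : Group) (i : A -> E) (p : E -> G) : Prop :=
  [/\ is_hom i, is_hom p, injective i, (forall g : G, exists e : E, p e = g)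
    & (forall e : E, p e = gone <-> exists a : A, i a = e)].

Definition core_op (H : Group) (x y : H) : H := gmul (gmul y (ginv x)) y.

(* Its inverse operation x *^{-1} y, i.e. the inverse of the bijection
   x |-> x * y.  For Core(H) this map is an involution, so it is again
   y x^{-1} y. *)
Definition core_opinv (H : Group) (x y : H) : H := gmul (gmul y (ginv x)) y.

Definition core_inv (H : Group) (c : H) (y : H) : H := gmul y c.

(* Dynamical cocycle of a symmetric quandle (X, op, rho) (with inverse
   operation opinv) over the CONSTANT family S_x = S for all x (the only
   case needed below).  alpha x y s t = alpha_{x,y}(s,t), beta x s = beta_x(s). *)
Definition dynamical_cocycle (X S : Type) (op opinv : X -> X -> X)
    (rho : X -> X) (alpha : X -> X -> S -> S -> S) (beta : X -> S -> S) : Prop :=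
  (forall x y t, bijective (fun s => alpha x y s t)) /\
      (forall x y z s t w,
                   alpha (op x y) z (alpha x y s t) w
                   = alpha (op x z) (op y z) (alpha x z s w) (alpha y z t w)) /\
      (forall x y s t,
                   alpha (rho x) y (beta x s) t = beta (op x y) (alpha x y s t)) /\
      (forall x s, beta (rho x) (beta x s) = s) /\
      (forall x y s t,
                   (* alpha_{x,rho y}(beta_y t)(s) = (alpha_{x*^-1 y, y}(t))^{-1}(s) *)
                   alpha (opinv x y) y (alpha x (rho y) s (beta y t)) t = s) /\
      (forall x s, alpha x x s s = s).

Definition ext_op (X S : Type) (op : X -> X -> X) (alpha : X -> X -> S -> S -> S)
    (u v : X * S) : X * S :=
  (op u.1 v.1, alpha u.1 v.1 u.2 v.2).

Definition ext_inv (X S : Type) (rho : X -> X) (beta : X -> S -> S)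
    (u : X * S) : X * S :=
  (rho u.1, beta u.1 u.2).

Definition symq_iso (X Y : Type) (opX : X -> X -> X) (rhoX : X -> X)
    (opY : Y -> Y -> Y) (rhoY : Y -> Y) (f : X -> Y) : Prop :=
  [/\ bijective f,
      (forall x y, f (opX x y) = opY (f x) (f y))
    & (forall x, f (rhoX x) = rhoY (f x))].

(** Choosing a set-theoretic section [s] of [p] identifies [E] with [G * A]
    fibrewise over [G], via [e |-> (p e, s (p e)^-1 e)].  Transporting the core
    operation and the involution of [(Core(E), i z)] along this bijection
    yields maps [alpha] and [beta]; since [p] is a morphism of symmetric
    quandles [(Core(E), i z) -> (Core(G), p (i z))], the first coordinate of
    the transported structure is that of [Core(G)], and each axiom of the
    symmetric quandle [Core(E)] becomes one of the cocycle conditions. *)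

From mathcomp Require Import ssreflect ssrfun ssrbool.
From Stdlib Require Import ClassicalEpsilon.

Set Implicit Arguments.
Unset Strict Implicit.
Unset Printing Implicit Defensive.

Record symmetric_quandle (X : Type) (op opinv : X -> X -> X) (rho : X -> X)
    : Prop := SymmetricQuandle {
  sq_opK : forall x y, opinv (op x y) y = x;
  sq_opinvK : forall x y, op (opinv x y) y = x;
  sq_opxx : forall x, op x x = x;
  sq_opD : forall x y z, op (op x y) z = op (op x z) (op y z);
  sq_rhoK : involutive rho;
  sq_rho_op : forall x y, rho (op x y) = op (rho x) y;
  sq_op_rho : forall x y, op x (rho y) = opinv x y
}.

Section Transport.

Variables (Q X S : Type) (opQ opinvQ : Q -> Q -> Q) (rhoQ : Q -> Q).
Variables (opX opinvX : X -> X -> X) (rhoX : X -> X).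
Hypotheses (symQ : symmetric_quandle opQ opinvQ rhoQ)
           (symX : symmetric_quandle opX opinvX rhoX).
Variables (f : Q -> X * S) (g : X * S -> Q).
Hypotheses (fK : cancel f g) (gK : cancel g f).
Hypotheses (f_op : forall u v, (f (opQ u v)).1 = opX (f u).1 (f v).1)
           (f_rho : forall u, (f (rhoQ u)).1 = rhoX (f u).1).

Definition transport_alpha x y s t := (f (opQ (g (x, s)) (g (y, t)))).2.
Definition transport_beta x s := (f (rhoQ (g (x, s)))).2.

Local Notation alpha := transport_alpha.
Local Notation beta := transport_beta.

Lemma f_opinv u v : (f (opinvQ u v)).1 = opinvX (f u).1 (f v).1.
Proof. by rewrite -(sq_op_rho symQ) f_op f_rho (sq_op_rho symX). Qed.

Lemma g_fibre u x : (f u).1 = x -> g (x, (f u).2) = u.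
Proof. by move=> <-; rewrite -surjective_pairing fK. Qed.

Lemma fst_fg x s : (f (g (x, s))).1 = x.
Proof. by rewrite gK. Qed.

Lemma snd_fg x s : (f (g (x, s))).2 = s.
Proof. by rewrite gK. Qed.

Lemma g_alpha x y s t : g (opX x y, alpha x y s t) = opQ (g (x, s)) (g (y, t)).
Proof. by apply: g_fibre; rewrite f_op !fst_fg. Qed.

Lemma g_beta x s : g (rhoX x, beta x s) = rhoQ (g (x, s)).
Proof. by apply: g_fibre; rewrite f_rho fst_fg. Qed.

Lemma transport_alpha_bij x y t : bijective (fun s => alpha x y s t).
Proof.
exists (fun s' => (f (opinvQ (g (opX x y, s')) (g (y, t)))).2) => [s | s'].
  by rewrite g_alpha (sq_opK symQ) snd_fg.
have g_inv : g (x, (f (opinvQ (g (opX x y, s')) (g (y, t)))).2)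
             = opinvQ (g (opX x y, s')) (g (y, t)).
  by apply: g_fibre; rewrite f_opinv !fst_fg (sq_opK symX).
by rewrite /alpha g_inv (sq_opinvK symQ) snd_fg.
Qed.

Lemma transport_cocycle : dynamical_cocycle opX opinvX rhoX alpha beta.
Proof.
split; [exact: transport_alpha_bij | split; [|split; [|split; [|split]]]].
- by move=> x y z s t w; rewrite [LHS]/alpha [RHS]/alpha !g_alpha (sq_opD symQ).
- by move=> x y s t; rewrite [LHS]/alpha [RHS]/beta g_beta g_alpha (sq_rho_op symQ).
- by move=> x s; rewrite [LHS]/beta g_beta (sq_rhoK symQ) snd_fg.
- move=> x y s t; rewrite [LHS]/alpha -(sq_op_rho symX) g_alpha g_beta.
  by rewrite (sq_op_rho symQ) (sq_opinvK symQ) snd_fg.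
- by move=> x s; rewrite /alpha (sq_opxx symQ) snd_fg.
Qed.

Lemma transport_iso :
  symq_iso opQ rhoQ (ext_op opX alpha) (ext_inv rhoX beta) f.
Proof.
split; first by exists g.
- move=> u v; rewrite /ext_op /alpha -!surjective_pairing !fK.
  by rewrite -f_op -surjective_pairing.
- move=> u; rewrite /ext_inv /beta -surjective_pairing fK.
  by rewrite -f_rho -surjective_pairing.
Qed.

End Transport.

Definition central (H : Group) (c : H) : Prop := forall e : H, gmul c e = gmul e c.

Section GroupTheory.

Variable H : Group.
Implicit Types x y z c : H.

Lemma mulKg x y : gmul (ginv x) (gmul x y) = y.
Proof. by rewrite gmulA gmulVg gmul1g. Qed.

Lemma mulVKg x y : gmul x (gmul (ginv x) y) = y.
Proof. by rewrite gmulA gmulgV gmul1g. Qed.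

Lemma mulgI x : injective (gmul x).
Proof. by move=> y z e; rewrite -(mulKg x y) e mulKg. Qed.

Lemma invMg x y : ginv (gmul x y) = gmul (ginv y) (ginv x).
Proof. by apply: (@mulgI (gmul x y)); rewrite gmulgV -gmulA mulVKg gmulgV. Qed.

Lemma invgK : involutive (@ginv H).
Proof. by move=> x; apply: (@mulgI (ginv x)); rewrite gmulgV gmulVg. Qed.

Lemma inv_involution c : gmul c c = gone -> ginv c = c.
Proof. by move=> c2; apply: (@mulgI c); rewrite gmulgV c2. Qed.

Ltac group_simpl :=
  do 4 rewrite -?gmulA ?mulKg ?mulVKg ?gmulgV ?gmulVg ?gmulg1 ?gmul1g //.

Lemma core_opK x y : core_op (core_op x y) y = x.
Proof. by rewrite /core_op !invMg !invgK; group_simpl. Qed.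

Lemma core_opD x y z :
  core_op (core_op x y) z = core_op (core_op x z) (core_op y z).
Proof. by rewrite /core_op !invMg !invgK; group_simpl. Qed.

Lemma core_symmetric_quandle c :
  central c -> gmul c c = gone ->
  symmetric_quandle (@core_op H) (@core_opinv H) (core_inv c).
Proof.
move=> cC c2; split.
- exact: core_opK.
- exact: core_opK.
- by move=> x; rewrite /core_op gmulgV gmul1g.
- exact: core_opD.
- by move=> x; rewrite /core_inv -gmulA c2 gmulg1.
- move=> x y; rewrite /core_op /core_inv !invMg (inv_involution c2).
  by rewrite -!gmulA cC -!gmulA.
- by move=> x y; rewrite /core_op /core_inv /core_opinv -!gmulA cC -!gmulA c2 gmulg1.
Qed.

End GroupTheory.

Section Homomorphisms.

Variables (G H : Group) (f : G -> H).
Hypothesis f_hom : is_hom f.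

Lemma hom1 : f gone = gone.
Proof. by apply: (@mulgI _ (f gone)); rewrite -f_hom !gmulg1. Qed.

Lemma homV x : f (ginv x) = ginv (f x).
Proof. by apply: (@mulgI _ (f x)); rewrite -f_hom !gmulgV hom1. Qed.

Lemma hom_core_op x y : f (core_op x y) = core_op (f x) (f y).
Proof. by rewrite /core_op !f_hom homV. Qed.

Lemma hom_involution c : gmul c c = gone -> gmul (f c) (f c) = gone.
Proof. by move=> c2; rewrite -f_hom c2 hom1. Qed.

Lemma hom_central c :
  (forall y, exists x, f x = y) -> central c -> central (f c).
Proof. by move=> f_surj cC y; have [x <-] := f_surj y; rewrite -!f_hom cC. Qed.

End Homomorphisms.

Lemma extension_trivialization (A E G : Group) (i : A -> E) (p : E -> G) :
  group_extension i p -> exists2 f : E -> G * A, bijective f & forall e, (f e).1 = p e.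
Proof.
case=> i_hom p_hom i_inj p_surj p_ker.
have [s sK] := choice _ p_surj.
have in_kernel e : exists a, i a = gmul (ginv (s (p e))) e.
  by apply/p_ker; rewrite p_hom homV // sK gmulVg.
have [t tE] := choice _ in_kernel.
have p_i a : p (i a) = gone by apply/p_ker; exists a.
exists (fun e => (p e, t e)) => //.
exists (fun u => gmul (s u.1) (i u.2)) => [e | [x a]] /=.
  by rewrite tE mulVKg.
rewrite p_hom p_i gmulg1 sK; congr pair.
by apply: i_inj; rewrite tE p_hom p_i gmulg1 sK mulKg.
Qed.

Theorem corollary5p3 (A E G : Group) (i : A -> E) (p : E -> G)
  (hext : group_extension i p)
  (z : A) (hzc : forall e : E, gmul (i z) e = gmul e (i z))
  (hz2 : gmul z z = gone) :
  let zbar := p (i z) in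
  exists (alpha : G -> G -> A -> A -> A) (beta : G -> A -> A),
    dynamical_cocycle (@core_op G) (@core_opinv G) (core_inv zbar) alpha beta /\
    exists f : E -> G * A,
      symq_iso (@core_op E) (core_inv (i z))
               (ext_op (@core_op G) alpha) (ext_inv (core_inv zbar) beta) f.
Proof.
move=> zbar; have [i_hom p_hom _ p_surj _] := hext.
have [f [g fK gK] f_p] := extension_trivialization hext.
have iz2 := hom_involution i_hom hz2.
have symE := core_symmetric_quandle hzc iz2.
have symG := core_symmetric_quandle (hom_central p_hom p_surj hzc)
                                    (hom_involution p_hom iz2).
have f_op u v : (f (core_op u v)).1 = core_op (f u).1 (f v).1.
  by rewrite !f_p hom_core_op.
have f_rho u : (f (core_inv (i z) u)).1 = core_inv zbar (f u).1.
  by rewrite !f_p /core_inv p_hom.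
exists (transport_alpha (@core_op E) f g), (transport_beta (core_inv (i z)) f g).
split; first exact: (transport_cocycle symE symG fK gK f_op f_rho).
by exists f; exact: transport_iso.
Qed.
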